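(* In the setting described in the context, for any slot allocation $\tau$ of the slot set $\Lambda$, the associated service placement $X^\tau$ is feasible, i.e. $\sum_{i\in S}s_i\mathbf 1[j\in X^\tau_i]\le c_j$ for all $j\in V$.
   Context: An SPSC instance: finite sets $S$ (services), $V$ (nodes), $U$ (users); sizes $s_i>0$; capacities $c_j>0$; for each user $k$ a service $i_k\in S$, a set $T_k\subseteq V$, a reward $w_k>0$. A service placement $X=\{X_i\subseteq V:i\in S\}$ is feasible iff $\sum_is_i\mathbf 1[j\in X_i]\le c_j$ for all $j$. Let $\{x_{ij}\},\{y_k\}$ be an optimal solution of the LP with nonnegative variables: maximize $\sum_ky_kw_k$ s.t. $y_k\le\sum_{j\in T_k}x_{i_kj}$, $y_k\le1$; $\sum_ix_{ij}s_i\le c_j$; $x_{ij}=0$ if $s_i>c_j$; $0\le x_{ij}\le1$. Fix $\beta<1$ with $\max_is_i\le\beta\min_jc_j$; $\gamma:=1-\sqrt\beta$, $\delta:=(1-\sqrt\beta)^2$, $\mathbb N=\{1,2,\dots\}$. For $j\in V,q\in\mathbb N$: $P_j^q:=\{i\in S:\gamma^qc_j\beta<s_i\le\gamma^{q-1}c_j\beta\}$, $d_j^q:=\sum_{i\in P_j^q}x_{ij}$, $v_j:=\delta c_j/\sum_{i\in S}s_ix_{ij}$, $n_j^q:=\lceil v_jd_j^q\rceil$. The slot set $\Lambda$: for every $j,q$ with $P_j^q\ne\emptyset$ create $n_j^q$ slots $\sigma$ with node $\nu(\sigma)=j$ and class $\kappa(\sigma)=q$. A slot allocation is $\tau:\Lambda\to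 S$ with $\tau(\sigma)\in P^{\kappa(\sigma)}_{\nu(\sigma)}$; its associated placement is $X^\tau_i:=\{j\in V:\exists\sigma\in\Lambda,\ \nu(\sigma)=j,\ \tau(\sigma)=i\}$. *)

From HB Require Import structures.
From mathcomp Require Import all_boot all_order all_algebra.
From mathcomp Require Import reals.
Set Implicit Arguments. Unset Strict Implicit. Unset Printing Implicit Defensive.
Import Order.TTheory GRing.Theory Num.Theory.
Local Open Scope ring_scope.

Section SPSC.
Variables (R : realType) (S V U : finType).
Variables (s : S -> R) (c : V -> R) (iu : U -> S) (T : U -> {set V}) (w : U -> R).

Definition lp_feasible (x : S -> V -> R) (y : U -> R) : Prop :=
  [/\ (forall i j, 0 <= x i j /\ x i j <= 1),
      (forall k, 0 <= y k /\ y k <= 1),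
      (forall k, y k <= \sum_(j in T k) x (iu k) j),
      (forall j, \sum_i x i j * s i <= c j) &
      (forall i j, c j < s i -> x i j = 0)].

Definition lp_objective (y : U -> R) : R := \sum_k y k * w k.

Definition lp_optimal (x : S -> V -> R) (y : U -> R) : Prop :=
  lp_feasible x y /\
  forall x' y', lp_feasible x' y' -> lp_objective y' <= lp_objective y.

Variables (x : S -> V -> R) (beta : R).

Definition gamma : R := 1 - Num.sqrt beta.
Definition delta : R := (1 - Num.sqrt beta) ^+ 2.

Definition Pclass (j : V) (q : nat) : {set S} :=
  [set i | (gamma ^+ q * c j * beta < s i) && (s i <= gamma ^+ q.-1 * c j * beta)].

Definition dval (j : V) (q : nat) : R := \sum_(i in Pclass j q) x i j.

(* v_j := delta c_j / sum_i s_i x_ij  (MathComp convention: a / 0 = 0) *)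
Definition vval (j : V) : R := delta * c j / (\sum_i s i * x i j).

Definition nslots (j : V) (q : nat) : int := Num.ceil (vval j * dval j q).

(* slots are encoded as triples (j, q, k): the k-th slot (k < n_j^q) of node j,
   class q, created only when q \in N = {1,2,...} and P_j^q is nonempty *)
Definition is_slot (j : V) (q k : nat) : bool :=
  [&& (1 <= q)%N, Pclass j q != set0 & (k%:Z < nslots j q)].

Definition slot_allocation (tau : V -> nat -> nat -> S) : Prop :=
  forall j q k, is_slot j q k -> tau j q k \in Pclass j q.

Definition placement_of (tau : V -> nat -> nat -> S) (i : S) (j : V) : Prop :=
  exists q k, is_slot j q k /\ tau j q k = i.

End SPSC.

(* feasibility of a placement given as a relation X i j ("j \in X_i"):
   for every node j, sum_i s_i 1[j \in X_i] <= c_j.  The set {i | j \in X_i}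
   is given as a finset A characterized extensionally (no classical choice). *)
Definition feasible_placement (R : realType) (S V : finType)
  (s : S -> R) (c : V -> R) (X : S -> V -> Prop) : Prop :=
  forall j : V, forall A : {set S}, (forall i, i \in A <-> X i j) ->
    \sum_(i in A) s i <= c j.

From HB Require Import structures.
From mathcomp Require Import all_boot all_order all_algebra.
From mathcomp Require Import reals.
From mathcomp Require Import ring.
Import Order.TTheory GRing.Theory Num.Theory.
Local Open Scope ring_scope.

(* Fix a node j. At most n_j^q < v_j d_j^q + 1 services of class q are placed
   on j, each of size at most gamma^(q-1) c_j beta. Since every size in class q
   exceeds gamma^q c_j beta, the v_j d_j^q parts together cost at most
   v_j (sum_i s_i x_ij) / gamma = gamma c_j, while the +1 parts form a geometric
   series bounded by c_j beta / (1 - gamma) = sqrt(beta) c_j. As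
   gamma + sqrt(beta) = 1, the load of j is at most c_j. *)

Lemma witness_ubound (T : eqType) (r : seq T) (P : T -> nat -> Prop) :
  {in r, forall i, exists q, P i q} ->
  exists M, {in r, forall i, exists2 q, (q < M)%N & P i q}.
Proof.
elim: r => [|a r IH] wit; first by exists 0%N.
have [qa Pa] := wit a (mem_head a r).
have [M HM] : exists M, {in r, forall i, exists2 q, (q < M)%N & P i q}.
  by apply: IH => i ir; apply: wit; rewrite inE ir orbT.
exists (maxn qa.+1 M) => i; rewrite inE => /predU1P[-> | ir].
  by exists qa; rewrite ?leq_maxl.
by have [q qM Pq] := HM i ir; exists q; rewrite // leq_max qM orbT.
Qed.

Lemma sum_over_classesE (R : nmodType) (I J : finType) (P : J -> pred I)
    (F : I -> R) :
  \sum_a \sum_(i | P a i) F i = \sum_i F i *+ #|[pred a | P a i]|.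
Proof.
rewrite (exchange_big_dep xpredT) //=; apply: eq_bigr => i _.
by rewrite -sumr_const.
Qed.

Lemma sum_over_classes_le (R : numDomainType) (I J : finType)
    (P : J -> pred I) (F : I -> R) :
  (forall i a b, P a i -> P b i -> a = b) -> (forall i, 0 <= F i) ->
  \sum_a \sum_(i | P a i) F i <= \sum_i F i.
Proof.
move=> Puniq F_ge0; rewrite sum_over_classesE; apply: ler_sum => i _.
have : (#|[pred a | P a i]| <= 1)%N.
  by apply/card_le1_eqP => a b; rewrite !inE => Pa Pb; apply: Puniq Pb Pa.
by case: #|[pred a | P a i]| => [|[]] // _; rewrite ?mulr0n ?mulr1n.
Qed.

Lemma sum_le_over_classes (R : numDomainType) (I J : finType) (A : pred I)
    (P : J -> pred I) (F : I -> R) :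
  (forall i, A i -> exists a, P a i) -> (forall i, 0 <= F i) ->
  \sum_(i | A i) F i <= \sum_a \sum_(i | A i && P a i) F i.
Proof.
move=> cover F_ge0; rewrite sum_over_classesE big_mkcond /=.
apply: ler_sum => i _; case: ifP => Ai /=; last exact: mulrn_wge0.
have [a Pa] := cover i Ai.
have : (0 < #|[pred a | P a i]|)%N by apply/card_gt0P; exists a.
by case: #|[pred a | P a i]| => // n _; rewrite mulrS lerDl mulrn_wge0.
Qed.

Lemma geometric_sum_le (R : numDomainType) (g : R) (M : nat) :
  0 <= g -> (1 - g) * \sum_(q < M) g ^+ q <= 1.
Proof. by move=> g_ge0; rewrite -opprB mulNr -subrX1 opprB gerBl exprn_ge0. Qed.

Section Feasibility.

Variables (R : realType) (S V : finType).
Variables (s : S -> R) (c : V -> R) (x : S -> V -> R) (beta : R).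
Hypotheses (s_gt0 : forall i, 0 < s i) (c_gt0 : forall j, 0 < c j).
Hypotheses (x_ge0 : forall i j, 0 <= x i j).
Hypotheses (beta_gt0 : 0 < beta) (beta_lt1 : beta < 1).

Local Notation P := (Pclass s c beta).
Local Notation g := (gamma beta).

Lemma gamma_gt0 : 0 < g.
Proof. by rewrite subr_gt0 -(sqrtr1 R) ltr_sqrt. Qed.

Lemma gamma_le1 : g <= 1.
Proof. by rewrite lerBlDr lerDl sqrtr_ge0. Qed.

Lemma Pclass_uniq j i q1 q2 : i \in P j q1 -> i \in P j q2 -> q1 = q2.
Proof.
wlog lt12 : q1 q2 / (q1 < q2)%N.
  move=> wlog_lt h1 h2; case: (ltngtP q1 q2) => [lt|lt|] //.
  - exact: wlog_lt h1 h2.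
  - by apply/esym; apply: wlog_lt h2 h1.
rewrite !inE => /andP[low1 _] /andP[_ up2]; exfalso.
have pow_le : g ^+ q2.-1 <= g ^+ q1.
  apply: ler_wiXn2l; [exact: ltW gamma_gt0 | exact: gamma_le1 |].
  by rewrite -ltnS prednK // (leq_ltn_trans (leq0n q1)).
have cb_ge0 : 0 <= c j * beta.
  by rewrite mulr_ge0 ?(ltW (c_gt0 j)) ?(ltW beta_gt0).
have up1 : s i <= g ^+ q1 * c j * beta.
  by apply: (le_trans up2); rewrite -!mulrA ler_wpM2r.
by have := lt_le_trans low1 up1; rewrite ltxx.
Qed.

Lemma Pclass_lt j q i : i \in P j q.+1 -> g ^+ q * c j * beta < s i / g.
Proof.
rewrite inE => /andP[low _]; rewrite ltr_pdivlMr ?gamma_gt0 //.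
by rewrite mulrAC [_ * g]mulrAC -exprSr.
Qed.

Lemma dval_ge0 j q : 0 <= dval s c x beta j q.
Proof. exact: sumr_ge0. Qed.

Lemma vval_ge0 j : 0 <= vval s c x beta j.
Proof.
rewrite divr_ge0 ?(mulr_ge0 (sqr_ge0 _) (ltW (c_gt0 j))) //.
by apply: sumr_ge0 => i _; rewrite mulr_ge0 ?(ltW (s_gt0 i)).
Qed.

Lemma nslots_ge0 j q : 0 <= nslots s c x beta j q.
Proof.
rewrite ceil_ge0; apply: lt_le_trans (mulr_ge0 (vval_ge0 j) (dval_ge0 j q)).
by rewrite ltrN10.
Qed.

Lemma nslots_lt j q :
  (nslots s c x beta j q)%:~R < vval s c x beta j * dval s c x beta j q + 1.
Proof. by rewrite -ltrBlDr -[1]/(1%:~R) -intrB ceilB1_lt. Qed.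

Lemma vval_mul_le j : vval s c x beta j * ((\sum_i s i * x i j) / g) <= g * c j.
Proof.
rewrite /vval /delta -/g; set Y := \sum_i _.
have [->|Y_neq0] := eqVneq Y 0.
  by rewrite invr0 mulr0 mul0r mulr_ge0 ?(ltW gamma_gt0) ?(ltW (c_gt0 j)).
have g_neq0 : g != 0 by rewrite gt_eqF ?gamma_gt0.
suff -> : g ^+ 2 * c j / Y * (Y / g) = g * c j by [].
by field; rewrite Y_neq0 g_neq0.
Qed.

Lemma weighted_dval_le j M :
  \sum_(q < M) dval s c x beta j q.+1 * (g ^+ q * c j * beta)
    <= (\sum_i s i * x i j) / g.
Proof.
apply: (@le_trans _ _
  (\sum_(q < M) \sum_(i | i \in P j q.+1) x i j * (s i / g))).
  apply: ler_sum => q _; rewrite mulr_suml; apply: ler_sum => i iP.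
  by rewrite ler_wpM2l // ltW // Pclass_lt.
rewrite mulr_suml; under [X in _ <= X]eq_bigr do rewrite [s _ * _]mulrC -mulrA.
apply: sum_over_classes_le => [i a b Pa Pb | i].
  by apply: val_inj; apply: succn_inj; apply: Pclass_uniq Pa Pb.
by rewrite mulr_ge0 ?divr_ge0 ?(ltW (s_gt0 i)) ?(ltW gamma_gt0).
Qed.

Lemma class_bounds_sum_le j M :
  \sum_(q < M) g ^+ q * c j * beta <= Num.sqrt beta * c j.
Proof.
have one_sub_g : 1 - g = Num.sqrt beta by rewrite /gamma opprB addrC subrK.
have -> : \sum_(q < M) g ^+ q * c j * beta
    = Num.sqrt beta * c j * ((1 - g) * \sum_(q < M) g ^+ q).
  rewrite -!mulr_suml one_sub_g; set G := \sum_(q < M) _.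
  by rewrite -[X in _ * X = _](sqr_sqrtr (ltW beta_gt0)); ring.
rewrite -[X in _ <= X]mulr1 ler_wpM2l ?geometric_sum_le ?(ltW gamma_gt0) //.
by rewrite mulr_ge0 ?sqrtr_ge0 ?(ltW (c_gt0 j)).
Qed.

Variables (tau : V -> nat -> nat -> S).
Hypothesis tau_alloc : slot_allocation s c x beta tau.

Lemma card_placed_class_le j q (A : {set S}) :
    (forall i, i \in A -> placement_of s c x beta tau i j) ->
  (#|[set i in A | i \in P j q]| <= `|nslots s c x beta j q|)%N.
Proof.
move=> placed; set n := `|_|%N.
apply: (@leq_trans #|[set tau j q (val k) | k : 'I_n]|); last first.
  by apply: leq_trans (leq_imset_card _ _) _; rewrite card_ord.
apply/subset_leq_card/subsetP => i; rewrite inE => /andP[iA iP].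
have [q' [k [slot_k tau_k]]] := placed i iA.
have eq_q : q = q' by apply: Pclass_uniq iP _; rewrite -tau_k tau_alloc.
subst q'; case/and3P: slot_k => _ _ k_lt.
have k_lt_n : (k < n)%N by rewrite -ltz_nat gez0_abs ?nslots_ge0.
by apply/imsetP; exists (Ordinal k_lt_n).
Qed.

Lemma sum_placed_class_le j q (A : {set S}) :
    (forall i, i \in A -> placement_of s c x beta tau i j) ->
  \sum_(i in A | i \in P j q.+1) s i
    <= (vval s c x beta j * dval s c x beta j q.+1 + 1) * (g ^+ q * c j * beta).
Proof.
move=> placed; set B := [set i in A | i \in P j q.+1].
have bound_ge0 : 0 <= g ^+ q * c j * beta.
  by rewrite !mulr_ge0 ?exprn_ge0 ?(ltW gamma_gt0) ?(ltW (c_gt0 j))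
    ?(ltW beta_gt0).
have -> : \sum_(i in A | i \in P j q.+1) s i = \sum_(i in B) s i.
  by apply: eq_bigl => i; rewrite /B !inE.
apply: (@le_trans _ _ (\sum_(i in B) g ^+ q * c j * beta)).
  by apply: ler_sum => i; rewrite inE => /andP[_]; rewrite inE => /andP[].
rewrite sumr_const -mulr_natl ler_wpM2r //.
apply: le_trans (ltW (nslots_lt j q.+1)).
rewrite -[X in _ <= X%:~R](gez0_abs (nslots_ge0 j q.+1)) ler_nat.
exact: card_placed_class_le.
Qed.

Lemma placed_load_le j (A : {set S}) :
    (forall i, i \in A -> placement_of s c x beta tau i j) ->
  \sum_(i in A) s i <= c j.
Proof.
move=> placed.
have [M classM] : exists M, {in enum A, forall i,
    exists2 q, (q < M)%N & i \in P j q.+1}.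
  apply: witness_ubound => i; rewrite mem_enum => /placed[q [k [slot_k <-]]].
  case/and3P: (slot_k); case: q slot_k => // q slot_k _ _ _.
  by exists q; apply: tau_alloc.
have by_class : \sum_(i in A) s i
    <= \sum_(q < M) \sum_(i in A | i \in P j q.+1) s i.
  apply: sum_le_over_classes => [i iA | i]; last exact: ltW.
  by have [|q qM iP] := classM i; [rewrite mem_enum | exists (Ordinal qM)].
apply: (le_trans by_class); apply: le_trans (ler_sum _ _) _.
  by move=> q _; apply: sum_placed_class_le.
under eq_bigr do rewrite mulrDl mul1r -mulrA.
rewrite big_split /= -mulr_sumr.
apply: le_trans (lerD (le_trans (ler_wpM2l (vval_ge0 j) (weighted_dval_le j M))
                        (vval_mul_le j)) (class_bounds_sum_le j M)) _.
by rewrite -mulrDl /gamma subrK mul1r.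
Qed.

End Feasibility.

Theorem theorem4 (R : realType) (S V U : finType)
  (s : S -> R) (c : V -> R) (iu : U -> S) (T : U -> {set V}) (w : U -> R)
  (hs : forall i, 0 < s i) (hc : forall j, 0 < c j) (hw : forall k, 0 < w k)
  (x : S -> V -> R) (y : U -> R)
  (hopt : lp_optimal s c iu T w x y)
  (beta : R) (hbeta1 : beta < 1) (hbeta : forall i j, s i <= beta * c j)
  (tau : V -> nat -> nat -> S)
  (htau : slot_allocation s c x beta tau) :
  feasible_placement s c (placement_of s c x beta tau).
Proof.
move=> j A hA.
have [->|[i0 _]] := set_0Vmem A; first by rewrite big_set0 ltW.
have beta_gt0 : 0 < beta.
  by have := lt_le_trans (hs i0) (hbeta i0 j); rewrite pmulr_lgt0.
have [[x_bounds _ _ _ _] _] := hopt.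
have x_ge0 i j' : 0 <= x i j' by case: (x_bounds i j').
apply: (@placed_load_le _ _ _ s c x beta hs hc x_ge0 beta_gt0 hbeta1 tau htau).
by move=> i /hA.
Qed.
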